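(* Let $(I,d,(I_n)_n)$ be a uniform metric index set, $W$ a compact Hausdorff space and $m:X^{\mathbb{R}}\to C^*(W)$ a sequence measure function with associated operator measure function $\overline{m}$. Then for any two non-expansive operators $T_1,T_2\in B(\ell^2(I))$, $\overline{m}(T_1T_2)=\overline{m}(T_2T_1)$.
   Context: $I$ is countable with nested finite subsets $I_1\subset I_2\subset\cdots$, $\bigcup_nI_n=I$, and a quasi-distance $d$ (i.e. $d\ge0$, $d(i,i)=0$, symmetric, triangle inequality); $B_R(i)=\{j:d(j,i)\le R\}$. $(I,d,(I_n))$ is a uniform metric index set if $\sup_i|B_R(i)|<\infty$ for all $R>0$ and $\lim_{n\to\infty}|(\bigcup_{j\in I\setminus I_n}B_R(j))\cap I_n|/|I_n|=0$ for all $R>0$. $\{\delta_i\}$ is the canonical basis of $\ell^2(I)$; $A\in B(\ell^2(I))$ is row non-expansive if for every $\varepsilon>0$ there is $N$ with $\sum_{j\notin B_N(i)}|\langle A\delta_i,\delta_j\rangle|^2<\varepsilon$ for all $i$, and non-expansive if $A$ and $A^*$ are row non-expansive. Frame compatible sequences: nonnegative $\mathbf{x}$ with $0\le x_1\le|I_1|$, $0\le x_i-x_{i-1}\le|I_i\setminus I_{i-1}|$; $X$ their set, $X^+=\{c\mathbf{x}\}_{c\ge0}$, $X^{\mathbb{R}}=X^+-X^+$. $\mathbf{x}\approx\mathbf{y}$ iff $\lim(x_n-y_n)/|I_n|=0$; $\mathbf{y}\leqq\mathbf{x}$ iff $\liminf(x_n-y_n)/|I_n|\ge0$. $C^*(W)$: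 real continuous functions on $W$. A sequence measure function is a linear $m:X^{\mathbb{R}}\to C^*(W)$ with $m(\mathbf{x})=m(\mathbf{y})\iff\mathbf{x}\approx\mathbf{y}$ on $X^{\mathbb{R}}$, $m(\mathbf{x})\le m(\mathbf{y})\iff\mathbf{x}\leqq\mathbf{y}$ on $X^+$, and $m((|I_1|,|I_2|,\dots))=1$. For $T\in B(\ell^2(I))$ let $b(T)=(\sum_{i\in I_n}\langle T\delta_i,\delta_i\rangle)_n$; its real and imaginary parts lie in $X^{\mathbb{R}}$. The operator measure function is $\overline{m}(T)=m(\operatorname{Re}b(T))+i\,m(\operatorname{Im}b(T))$ (a complex-valued continuous function on $W$). *)

From HB Require Import structures.
From mathcomp Require Import all_boot all_order all_algebra.
From mathcomp Require Import all_classical all_reals all_analysis.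
From mathcomp Require Import finmap complex.
Import Order.TTheory GRing.Theory Num.Theory.
Import numFieldNormedType.Exports.
Set Implicit Arguments. Unset Strict Implicit. Unset Printing Implicit Defensive.

Local Open Scope ring_scope.
Local Open Scope classical_set_scope.

Section Defs.
Context {R : realType} {I : countType}.

(** ** Uniform metric index sets.
    The paper's I_1 ⊂ I_2 ⊂ ... is [In 0], [In 1], ... (index shifted by one). *)

Definition nested_exhaustion (In : nat -> {fset I}) : Prop :=
  (forall n, (In n `<=` In n.+1)%fset) /\ (forall i, exists n, i \in In n).

Definition quasi_distance (d : I -> I -> R) : Prop :=
  [/\ forall i j, 0 <= d i j,
      forall i, d i i = 0,
      forall i j, d i j = d j i
    & forall i j k, d i k <= d i j + d j k].

Definition ball_idx (d : I -> I -> R) (r : R) (i : I) : set I := [set j | d j i <= r].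

Definition cardI (In : nat -> {fset I}) (n : nat) : R := (#|` In n|)%:R.

Definition boundary_idx (d : I -> I -> R) (In : nat -> {fset I}) (r : R) (n : nat)
  : {fset I} :=
  [fset i in In n | `[< exists j, j \notin In n /\ d i j <= r >] ]%fset.

Definition uniform_metric_index_set (d : I -> I -> R) (In : nat -> {fset I}) : Prop :=
  [/\ nested_exhaustion In, quasi_distance d,
      (* sup_i |B_r(i)| < oo : all balls of radius r have at most M elements *)
      (forall r, 0 < r -> exists M : nat, forall i (s : seq I),
          uniq s -> all (fun j => d j i <= r) s -> (size s <= M)%N)
    & (forall r, 0 < r ->
          (fun n : nat => (#|` boundary_idx d In r n|)%:R / cardI In n : R) @ \oo --> 0)].

Definition frame_compatible (In : nat -> {fset I}) (x : nat -> R) : Prop :=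
  [/\ forall n, 0 <= x n,
      0 <= x 0%N <= cardI In 0
    & forall n, 0 <= x n.+1 - x n <= (#|` (In n.+1 `\` In n)%fset|)%:R].

Definition Xplus (In : nat -> {fset I}) (x : nat -> R) : Prop :=
  exists c (y : nat -> R), [/\ 0 <= c, frame_compatible In y & x = (fun n => c * y n)].

Definition XR (In : nat -> {fset I}) (x : nat -> R) : Prop :=
  exists y z, [/\ Xplus In y, Xplus In z & x = (fun n => y n - z n)].

Definition seq_approx (In : nat -> {fset I}) (x y : nat -> R) : Prop :=
  (fun n : nat => (x n - y n) / cardI In n : R) @ \oo --> 0.

Definition seq_leqq (In : nat -> {fset I}) (y x : nat -> R) : Prop :=
  (0 <= limn_einf (fun n => ((x n - y n) / cardI In n)%:E))%E.

(** Sequence measure function m : X^R -> C*(W) (m is given as a total function on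
    real sequences; only its values on X^R matter). *)
Definition seq_measure_fun (In : nat -> {fset I}) (W : topologicalType)
  (m : (nat -> R) -> W -> R) : Prop :=
  [/\ forall x, XR In x -> continuous (m x),
      forall (a b : R) x y, XR In x -> XR In y ->
         m (fun n => a * x n + b * y n) = (fun w => a * m x w + b * m y w),
      forall x y, XR In x -> XR In y -> (m x = m y <-> seq_approx In x y),
      forall x y, Xplus In x -> Xplus In y ->
         ((forall w, m x w <= m y w) <-> seq_leqq In x y)
    & m (cardI In) = (fun _ => 1)].

Definition sqmod (z : R[i]) : R := (Normc.normc z) ^+ 2.

Definition l2norm2 (f : I -> R[i]) : \bar R := esum setT (fun i => (sqmod (f i))%:E).

Definition in_l2 (f : I -> R[i]) : Prop := (l2norm2 f < +oo)%E.

Definition delta (i : I) : I -> R[i] := fun j => if j == i then 1 else 0.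

Definition bounded_op (T : (I -> R[i]) -> I -> R[i]) : Prop :=
  [/\ forall f, in_l2 f -> in_l2 (T f),
      forall (a : R[i]) f g, in_l2 f -> in_l2 g ->
         T (fun j => a * f j + g j) = (fun j => a * T f j + T g j)
    & exists K : R, forall f, in_l2 f -> (l2norm2 (T f) <= K%:E * l2norm2 f)%E].

(** <T δ_i, δ_j> = (T δ_i) j *)
Definition op_entry (T : (I -> R[i]) -> I -> R[i]) (i j : I) : R[i] := T (delta i) j.

Definition row_nonexpansive (d : I -> I -> R) (A : (I -> R[i]) -> I -> R[i]) : Prop :=
  forall eps : R, 0 < eps -> exists N : R, forall i,
    (esum (~` ball_idx d N i) (fun j => (sqmod (op_entry A i j))%:E) < eps%:E)%E.

(** row non-expansiveness of A^*, using <A^* δ_i, δ_j> = conj <A δ_j, δ_i>,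
    so |<A^* δ_i, δ_j>| = |op_entry A j i|. *)
Definition adjoint_row_nonexpansive (d : I -> I -> R) (A : (I -> R[i]) -> I -> R[i])
  : Prop :=
  forall eps : R, 0 < eps -> exists N : R, forall i,
    (esum (~` ball_idx d N i) (fun j => (sqmod (op_entry A j i))%:E) < eps%:E)%E.

Definition nonexpansive d A : Prop := row_nonexpansive d A /\ adjoint_row_nonexpansive d A.

Definition bseq (In : nat -> {fset I}) (T : (I -> R[i]) -> I -> R[i]) (n : nat) : R[i] :=
  \sum_(i <- In n) op_entry T i i.

Definition op_measure (In : nat -> {fset I}) (W : topologicalType)
  (m : (nat -> R) -> W -> R) (T : (I -> R[i]) -> I -> R[i]) : W -> R[i] :=
  fun w => (real_complex R (m (fun n => complex.Re (bseq In T n)) w))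
           + 'i * (real_complex R (m (fun n => complex.Im (bseq In T n)) w)).

End Defs.

From Pilot Require Import Defs.
From HB Require Import structures.
From mathcomp Require Import all_boot all_order all_algebra.
From mathcomp Require Import all_classical all_reals all_analysis.
From mathcomp Require Import finmap complex lra.
Import Order.TTheory GRing.Theory Num.Theory.
Import numFieldNormedType.Exports.
Set Implicit Arguments. Unset Strict Implicit. Unset Printing Implicit Defensive.
Local Open Scope ring_scope.
Local Open Scope classical_set_scope.

(** For a finite window [s], splitting [T2 δ_i] into its part on [s] and its
    part [Q_s T2 δ_i] off [s] (here [proj_out s]) gives
    [Σ_{i∈s} <T1T2 δ_i, δ_i> - <T2T1 δ_i, δ_i>
       = Σ_{i∈s} <T1 Q_s T2 δ_i, δ_i> - <T2 Q_s T1 δ_i, δ_i>],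
    since the two finite double sums [Σ_{i,k∈s} <T2 δ_i, δ_k> <T1 δ_k, δ_i>]
    coincide.  Each defect term is bounded, and it is small as soon as the
    ball of radius [r] around [i] lies in [s]: row non-expansiveness makes the
    row tails outside that ball uniformly small.  Hence on [I_n] the total
    defect is at most a constant times the number of boundary points plus
    [δ |I_n|], which is [o(|I_n|)].  So [Re b(T1T2) ≈ Re b(T2T1)], likewise for
    [Im], and since bounded diagonals make these sequences differences of two
    frame compatible multiples, [m] identifies them. *)

Section L2.
Context {R : realType} {I : countType}.
Local Notation op := ((I -> R[i]) -> I -> R[i]).
Implicit Types (f g : I -> R[i]) (T : op) (s : {fset I}).

Lemma sqmodE (z : R[i]) : sqmod z = complex.Re z ^+ 2 + complex.Im z ^+ 2.
Proof. by case: z => a b; rewrite /sqmod /= sqr_sqrtr // addr_ge0 // sqr_ge0. Qed.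

Lemma sqmod_ge0 (z : R[i]) : 0 <= sqmod z.
Proof. by rewrite sqmodE addr_ge0 // sqr_ge0. Qed.

Lemma sqmod0 : sqmod (0 : R[i]) = 0.
Proof. by rewrite sqmodE /= expr0n /= addr0. Qed.

Lemma sqr_Re_le_sqmod (z : R[i]) : complex.Re z ^+ 2 <= sqmod z.
Proof. by rewrite sqmodE lerDl sqr_ge0. Qed.

Lemma sqr_Im_le_sqmod (z : R[i]) : complex.Im z ^+ 2 <= sqmod z.
Proof. by rewrite sqmodE lerDr sqr_ge0. Qed.

Lemma sqmod_le_l2norm2 f i : ((sqmod (f i))%:E <= l2norm2 f)%E.
Proof.
rewrite /l2norm2; apply: esum_ge; exists [set i]; first by split; [exact: finite_set1|].
by rewrite fsbig_set1.
Qed.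

Lemma le_l2norm2 f g : (forall j, sqmod (g j) <= sqmod (f j)) ->
  (l2norm2 g <= l2norm2 f)%E.
Proof. by move=> le_gf; apply: le_esum => j _; rewrite lee_fin. Qed.

Lemma in_l2_le f g : (forall j, sqmod (g j) <= sqmod (f j)) -> in_l2 f -> in_l2 g.
Proof. by move=> le_gf; apply: le_lt_trans; apply: le_l2norm2. Qed.

Lemma l2norm2_fsupp s g : (forall j, j \notin s -> g j = 0) ->
  l2norm2 g = (\sum_(k <- s) sqmod (g k))%:E.
Proof.
move=> g_supp; rewrite /l2norm2 -sumEFin (fsbig_seq _ _ (fset_uniq s)).
rewrite -esum_fset; last 2 first.
- exact: finite_seq.
- by move=> i _; rewrite lee_fin sqmod_ge0.
rewrite [RHS]esum_mkcond; apply: eq_esum => j _.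
by case: ifPn => //; rewrite notin_setE /= => /negP js; rewrite g_supp ?sqmod0.
Qed.

Lemma in_l2_fsupp s g : (forall j, j \notin s -> g j = 0) -> in_l2 g.
Proof. by move=> g_supp; rewrite /in_l2 (l2norm2_fsupp g_supp) ltry. Qed.

Lemma delta_fsupp i j : j \notin [fset i]%fset -> @delta R I i j = 0.
Proof. by rewrite inE /delta => /negbTE ->. Qed.

Lemma l2norm2_delta i : l2norm2 (@delta R I i) = 1%E.
Proof.
rewrite (l2norm2_fsupp (@delta_fsupp i)) big_seq_fset1 /delta eqxx.
by rewrite sqmodE /= expr0n /= expr1n addr0.
Qed.

Lemma in_l2_delta i : in_l2 (@delta R I i).
Proof. exact: in_l2_fsupp (@delta_fsupp i). Qed.

Lemma in_l2_sum_delta (r : seq I) (c : I -> R[i]) :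
  in_l2 (fun j => \sum_(k <- r) c k * delta k j).
Proof.
apply: (in_l2_fsupp (s := [fset x in r]%fset)) => j; rewrite inE => jr.
rewrite big_seq big1 // => k kr; rewrite /delta; case: eqP => [ek|]; last by rewrite mulr0.
by rewrite ek kr in jr.
Qed.

Definition op_bounded_by T (K : R) :=
  forall f, in_l2 f -> (l2norm2 (T f) <= K%:E * l2norm2 f)%E.

Lemma bounded_opP T : bounded_op T -> exists2 K, 0 <= K & op_bounded_by T K.
Proof.
case=> _ _ [K TK]; exists (Num.max K 0); first by rewrite le_max lexx orbT.
move=> f f2; apply: le_trans (TK f f2) _; apply: lee_wpmul2r.
  by apply: esum_ge0 => j _; rewrite lee_fin sqmod_ge0.
by rewrite lee_fin le_max lexx.
Qed.

Lemma sqmod_op_le T K f e i : 0 <= K -> op_bounded_by T K -> in_l2 f ->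
  (l2norm2 f <= e%:E)%E -> sqmod (T f i) <= K * e.
Proof.
move=> K0 TK f2 fe; rewrite -lee_fin; apply: le_trans (sqmod_le_l2norm2 _ i) _.
by apply: le_trans (TK f f2) _; rewrite EFinM; exact: lee_wpmul2l.
Qed.

Lemma l2norm2_op_delta_le T K i : op_bounded_by T K ->
  (l2norm2 (T (delta i)) <= K%:E)%E.
Proof. by move=> TK; apply: le_trans (TK _ (in_l2_delta i)) _; rewrite l2norm2_delta mule1. Qed.

Lemma bounded_op0 T : bounded_op T -> T (fun=> 0) = (fun=> 0).
Proof.
case=> _ T_lin _; have l2_0 : in_l2 (fun _ : I => 0 : R[i]).
  by apply: (in_l2_fsupp (s := fset0)).
have := T_lin (-1) _ _ l2_0 l2_0.
have -> : (fun j : I => -1 * (fun=> 0 : R[i]) j + (fun=> 0 : R[i]) j) = (fun=> 0).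
  by apply: funext => j; rewrite mulr0 addr0.
by move=> ->; apply: funext => j; rewrite mulN1r addNr.
Qed.

Lemma bounded_op_sum_delta T (r : seq I) (c : I -> R[i]) : bounded_op T ->
  T (fun j => \sum_(k <- r) c k * delta k j) =
  (fun j => \sum_(k <- r) c k * T (delta k) j).
Proof.
move=> bT; have [_ T_lin _] := bT; elim: r => [|x r IHr].
  under eq_fun do rewrite big_nil.
  by rewrite bounded_op0 //; under [RHS]eq_fun do rewrite big_nil.
have -> : (fun j => \sum_(k <- x :: r) c k * @delta R I k j) =
          (fun j => c x * delta x j + (fun j => \sum_(k <- r) c k * delta k j) j).
  by apply: funext => j; rewrite big_cons.
rewrite T_lin ?IHr; [|exact: in_l2_delta|exact: in_l2_sum_delta].
by apply: funext => j; rewrite big_cons.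
Qed.

Definition proj_out s g : I -> R[i] := fun j => if j \in s then 0 else g j.

Lemma sqmod_proj_out_le s g j : sqmod (proj_out s g j) <= sqmod (g j).
Proof. by rewrite /proj_out; case: ifP; rewrite ?sqmod0 ?sqmod_ge0. Qed.

Lemma in_l2_proj_out s g : in_l2 g -> in_l2 (proj_out s g).
Proof. exact: in_l2_le (sqmod_proj_out_le s g). Qed.

Lemma l2norm2_proj_out_le s g : (l2norm2 (proj_out s g) <= l2norm2 g)%E.
Proof. exact: le_l2norm2 (sqmod_proj_out_le s g). Qed.

(* The factor [1] matches the shape of the linearity axiom of [bounded_op]. *)
Lemma proj_out_split s g :
  g = (fun j => 1 * (\sum_(k <- s) g k * delta k j) + proj_out s g j).
Proof.
apply: funext => j; rewrite mul1r /proj_out; case: ifPn => js.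
  rewrite addr0 (big_fsetD1 _ js) /= /delta eqxx mulr1 big1_fset ?addr0 // => k.
  by rewrite !inE => /andP[kj _] _; rewrite eq_sym (negbTE kj) mulr0.
rewrite big1_fset ?add0r // => k ks _; rewrite /delta.
by case: eqP => [ek|]; [rewrite ek ks in js|rewrite mulr0].
Qed.

Lemma bounded_op_split T s g : bounded_op T -> in_l2 g ->
  T g = (fun j => \sum_(k <- s) g k * T (delta k) j + T (proj_out s g) j).
Proof.
move=> bT g2; have [_ T_lin _] := bT.
rewrite [in LHS](proj_out_split s g) T_lin; last 2 first.
- exact: in_l2_sum_delta.
- exact: in_l2_proj_out.
by apply: funext => j; rewrite mul1r bounded_op_sum_delta.
Qed.

Lemma op_entry_comp_split T1 T2 s i : bounded_op T1 -> bounded_op T2 ->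
  op_entry (T1 \o T2) i i =
  \sum_(k <- s) T2 (delta i) k * T1 (delta k) i + T1 (proj_out s (T2 (delta i))) i.
Proof.
move=> bT1 [T2_l2 _ _]; rewrite /op_entry /=.
by rewrite (bounded_op_split s bT1 (T2_l2 _ (in_l2_delta i))).
Qed.

Lemma trace_commutator T1 T2 s : bounded_op T1 -> bounded_op T2 ->
  \sum_(i <- s) op_entry (T1 \o T2) i i - \sum_(i <- s) op_entry (T2 \o T1) i i
  = \sum_(i <- s) (T1 (proj_out s (T2 (delta i))) i - T2 (proj_out s (T1 (delta i))) i).
Proof.
move=> bT1 bT2.
rewrite (eq_bigr _ (fun i _ => op_entry_comp_split s i bT1 bT2)).
rewrite (eq_bigr _ (fun i _ => op_entry_comp_split s i bT2 bT1)).
rewrite !big_split /= sumrN [X in _ - (X + _)]exchange_big /=.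
under [X in _ - (X + _)]eq_bigr do under eq_bigr do rewrite mulrC.
by rewrite opprD addrACA subrr add0r.
Qed.

Lemma l2norm2_proj_out_ball (d : I -> I -> R) s g i N :
  (forall j, d j i <= N -> j \in s) ->
  (l2norm2 (proj_out s g) <= esum (~` ball_idx d N i) (fun j => (sqmod (g j))%:E))%E.
Proof.
move=> ball_s; rewrite /l2norm2 [X in (_ <= X)%E]esum_mkcond.
apply: le_esum => j _; rewrite /proj_out; case: ifPn => js.
  by rewrite sqmod0; case: ifP; rewrite // lee_fin sqmod_ge0.
by rewrite ifT //; apply/mem_set => /= /ball_s; apply/negP.
Qed.

Lemma sqmod_op_comp_le T1 T2 K1 K2 i j : 0 <= K1 -> op_bounded_by T1 K1 ->
  bounded_op T2 -> op_bounded_by T2 K2 -> sqmod (T1 (T2 (delta i)) j) <= K1 * K2.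
Proof.
move=> K1_ge0 T1K [T2_l2 _ _] T2K.
exact: sqmod_op_le K1_ge0 T1K (T2_l2 _ (in_l2_delta i)) (l2norm2_op_delta_le i T2K).
Qed.

Lemma sqmod_op_proj_out_le T1 T2 K1 K2 s i : 0 <= K1 -> op_bounded_by T1 K1 ->
  bounded_op T2 -> op_bounded_by T2 K2 ->
  sqmod (T1 (proj_out s (T2 (delta i))) i) <= K1 * K2.
Proof.
move=> K1_ge0 T1K [T2_l2 _ _] T2K.
apply: sqmod_op_le K1_ge0 T1K (in_l2_proj_out s (T2_l2 _ (in_l2_delta i))) _.
exact: le_trans (l2norm2_proj_out_le _ _) (l2norm2_op_delta_le i T2K).
Qed.

Lemma sqmod_op_proj_out_tail_le (d : I -> I -> R) T1 T2 K1 s i N eps :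
  0 <= K1 -> op_bounded_by T1 K1 -> bounded_op T2 ->
  (forall j, d j i <= N -> j \in s) ->
  (esum (~` ball_idx d N i) (fun j => (sqmod (op_entry T2 i j))%:E) < eps%:E)%E ->
  sqmod (T1 (proj_out s (T2 (delta i))) i) <= K1 * eps.
Proof.
move=> K1_ge0 T1K [T2_l2 _ _] ball_s tail_lt.
apply: sqmod_op_le K1_ge0 T1K (in_l2_proj_out s (T2_l2 _ (in_l2_delta i))) _.
exact: le_trans (l2norm2_proj_out_ball (T2 (delta i)) ball_s) (ltW tail_lt).
Qed.

End L2.

Lemma sum_fset_le_card {R : numDomainType} {I : choiceType} (A : {fset I})
    (w : I -> R) (C : R) :
  (forall i, i \in A -> w i <= C) -> \sum_(i <- A) w i <= (#|` A|)%:R * C.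
Proof.
move=> wC; rewrite card_fset_sum1 natr_sum mulr_suml big_seq [leRHS]big_seq.
by apply: ler_sum => i iA; rewrite mul1r wC.
Qed.

Lemma norm_sum_fset_le {R : numDomainType} {I : choiceType} (A : {fset I})
    (w : I -> R) (C : R) :
  (forall i, `|w i| <= C) -> `|\sum_(i <- A) w i| <= (#|` A|)%:R * C.
Proof.
by move=> wC; apply: le_trans (ler_norm_sum _ _ _) (sum_fset_le_card _).
Qed.

Section FrameCompatible.
Context {R : realType} {I : countType}.
Variable In : nat -> {fset I}.
Hypothesis In_sub : forall n, (In n `<=` In n.+1)%fset.

Lemma card_fsetD_succ n :
  (#|` (In n.+1 `\` In n)%fset|)%:R = cardI In n.+1 - cardI In n :> R.
Proof. by rewrite cardfsDS // natrB // fsubset_leq_card. Qed.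

Lemma big_fsetD_succ (v : I -> R) n :
  \sum_(i <- In n.+1) v i = \sum_(i <- (In n.+1 `\` In n)%fset) v i + \sum_(i <- In n) v i.
Proof.
rewrite (big_fsetID _ (mem (In n))) /= addrC; congr (_ + _).
  by apply: eq_fbigl => x; rewrite !inE /= andbC.
apply: eq_fbigl => x; rewrite !inE /=; apply/andP/idP => [[]//|xn].
by split=> //; apply: (fsubsetP (In_sub n)).
Qed.

Lemma Xplus_of_increments (x : nat -> R) (c : R) : 0 < c ->
  0 <= x 0%N <= c * cardI In 0 ->
  (forall n, 0 <= x n.+1 - x n <= c * (#|` (In n.+1 `\` In n)%fset|)%:R) ->
  Xplus In x.
Proof.
move=> c0 /andP[x0_ge0 x0_le] dx.
have x_ge0 n : 0 <= x n.
  by elim: n => // n IHn; have /andP[dx_ge0 _] := dx n; lra.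
exists c, (fun n => x n / c); split; first exact: ltW.
  split=> [n||n]; first by rewrite divr_ge0 // ltW.
    by apply/andP; split; [rewrite divr_ge0 // ltW|rewrite ler_pdivrMr // mulrC].
  have /andP[dx_ge0 dx_le] := dx n; rewrite -mulrBl; apply/andP; split.
    by rewrite divr_ge0 // ltW.
  by rewrite ler_pdivrMr // mulrC.
by apply: funext => n; rewrite mulrC divfK // gt_eqF.
Qed.

Lemma XR_sum_bounded (v : I -> R) (C : R) : 0 < C -> (forall i, `|v i| <= C) ->
  XR In (fun n => \sum_(i <- In n) v i).
Proof.
move=> C0 vC; set u := fun n => _.
have u_le n : `|u n| <= cardI In n * C by exact: norm_sum_fset_le.
have du_le n : `|u n.+1 - u n| <= (#|` (In n.+1 `\` In n)%fset|)%:R * C.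
  by rewrite /u big_fsetD_succ addrK; exact: norm_sum_fset_le.
exists (fun n => C * cardI In n + u n), (fun n => C * cardI In n); split.
- apply: (@Xplus_of_increments _ (2 * C)); first by rewrite mulr_gt0.
    by move: (u_le 0%N); rewrite ler_norml => /andP[? ?]; apply/andP; split; nra.
  move=> n; rewrite card_fsetD_succ.
  move: (du_le n); rewrite card_fsetD_succ ler_norml => /andP[? ?].
  by apply/andP; split; nra.
- apply: (Xplus_of_increments C0).
    by rewrite lexx andbT mulr_ge0 // ?ltW // /cardI ler0n.
  move=> n; rewrite -mulrBr card_fsetD_succ lexx andbT mulr_ge0 // ?(ltW C0) //.
  by rewrite -card_fsetD_succ ler0n.
- by apply: funext => n; rewrite addrAC subrr add0r.
Qed.

End FrameCompatible.

Lemma norm_sum_fset_split {R : numDomainType} {I : choiceType} (A : {fset I}) (P : pred I)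
    (t : I -> R) (a b : R) : 0 <= b ->
  (forall i, `|t i| <= a) -> (forall i, ~~ P i -> `|t i| <= b) ->
  `|\sum_(i <- A) t i| <= (#|` [fset i in A | P i]%fset|)%:R * a + (#|` A|)%:R * b.
Proof.
move=> b0 ta tb; apply: le_trans (ler_norm_sum _ _ _) _.
rewrite (big_fsetID _ P) /=; apply: lerD; first exact: sum_fset_le_card.
apply: le_trans (sum_fset_le_card (C := b) _) _.
  by move=> i; rewrite !inE => /andP[_ /tb].
rewrite ler_wpM2r // ler_nat fsubset_leq_card //.
by apply/fsubsetP => i; rewrite !inE => /andP[].
Qed.

Lemma cvg0_ratio_of_approx {R : realType} (u c : nat -> R) : (forall n, 0 <= c n) ->
  (forall dl, 0 < dl -> exists (beta : nat -> R) (a : R),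
     (fun n => beta n / c n) @ \oo --> 0 /\ forall n, `|u n| <= beta n * a + c n * dl) ->
  (fun n => u n / c n) @ \oo --> 0.
Proof.
move=> c_ge0 approx; apply/cvgr0Pnorm_lt => e e0; have e20 : 0 < e / 2 by rewrite divr_gt0.
have [beta [a [beta_cvg u_le]]] := approx (e / 2) e20.
have : (fun n => beta n / c n * a) @ \oo --> 0.
  by rewrite -(mul0r a); apply: cvgM => //; exact: cvg_cst.
move=> /cvgr0Pnorm_lt /(_ (e / 2) e20); apply: filterS => n small.
have [->|c_neq0] := eqVneq (c n) 0; first by rewrite invr0 mulr0 normr0.
have c_gt0 : 0 < c n by rewrite lt_def c_neq0 c_ge0.
rewrite normrM normfV (gtr0_norm c_gt0) ltr_pdivrMr //.
have q_lt : beta n / c n * a < e / 2 by apply: le_lt_trans (ler_norm _) small.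
have betaE : beta n * a = beta n / c n * a * c n by rewrite mulrAC divfK.
have := u_le n; rewrite betaE => u_le_n.
have : 0 < c n * (e / 2 - beta n / c n * a) by rewrite mulr_gt0 // subr_gt0.
nra.
Qed.

Section CommutatorTrace.
Context {R : realType} {I : countType}.
Local Notation op := ((I -> R[i]) -> I -> R[i]).
Variable pr : {additive R[i] -> R}.
Hypothesis sqr_pr_le : forall z, pr z ^+ 2 <= sqmod z.

Lemma norm_pr_le (z : R[i]) (e : R) : 0 <= e -> sqmod z <= e ^+ 2 -> `|pr z| <= e.
Proof.
move=> e_ge0 z_le; have := sqr_pr_le z; rewrite ler_norml => pr_le.
by apply/andP; split; nra.
Qed.

Lemma XR_pr_bseq (In : nat -> {fset I}) (T : op) (K : R) :
  (forall n, (In n `<=` In n.+1)%fset) -> 0 <= K ->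
  (forall i, sqmod (op_entry T i i) <= K) -> XR In (fun n => pr (Defs.bseq In T n)).
Proof.
move=> In_sub K_ge0 T_diag.
have -> : (fun n => pr (Defs.bseq In T n)) = (fun n => \sum_(i <- In n) pr (op_entry T i i)).
  by apply: funext => n; rewrite raddf_sum.
apply: (XR_sum_bounded In_sub (C := 1 + K)); first by rewrite ltr_pwDl.
by move=> i; apply: norm_pr_le; [rewrite addr_ge0|apply: le_trans (T_diag i) _; nra].
Qed.

Lemma norm_pr_subr_le (a b : R[i]) (e : R) : 0 <= e ->
  sqmod a <= e ^+ 2 -> sqmod b <= e ^+ 2 -> `|pr (a - b)| <= e + e.
Proof.
move=> e_ge0 a_le b_le; rewrite raddfB; apply: le_trans (ler_normB _ _) _.
by apply: lerD; exact: norm_pr_le.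
Qed.

Lemma norm_pr_defect_le (T1 T2 : op) K1 K2 s i : 0 <= K1 -> 0 <= K2 ->
  bounded_op T1 -> op_bounded_by T1 K1 -> bounded_op T2 -> op_bounded_by T2 K2 ->
  `|pr (T1 (proj_out s (T2 (delta i))) i - T2 (proj_out s (T1 (delta i))) i)|
    <= (1 + K1 * K2) + (1 + K1 * K2).
Proof.
move=> K1_ge0 K2_ge0 bT1 T1K bT2 T2K.
have M_sqr : K1 * K2 <= (1 + K1 * K2) ^+ 2 by have := mulr_ge0 K1_ge0 K2_ge0; nra.
apply: norm_pr_subr_le; first by rewrite addr_ge0 // mulr_ge0.
  exact: le_trans (sqmod_op_proj_out_le _ _ K1_ge0 T1K bT2 T2K) M_sqr.
by apply: le_trans (sqmod_op_proj_out_le _ _ K2_ge0 T2K bT1 T1K) _; rewrite mulrC.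
Qed.

Lemma norm_pr_defect_tail_le (d : I -> I -> R) (T1 T2 : op) K1 K2 s i N1 N2 eps e :
  0 <= K1 -> 0 <= K2 -> 0 <= e -> K1 * eps <= e ^+ 2 -> K2 * eps <= e ^+ 2 ->
  bounded_op T1 -> op_bounded_by T1 K1 -> bounded_op T2 -> op_bounded_by T2 K2 ->
  (forall j, d j i <= N1 -> j \in s) -> (forall j, d j i <= N2 -> j \in s) ->
  (esum (~` ball_idx d N1 i) (fun j => (sqmod (op_entry T1 i j))%:E) < eps%:E)%E ->
  (esum (~` ball_idx d N2 i) (fun j => (sqmod (op_entry T2 i j))%:E) < eps%:E)%E ->
  `|pr (T1 (proj_out s (T2 (delta i))) i - T2 (proj_out s (T1 (delta i))) i)| <= e + e.
Proof.
move=> K1_ge0 K2_ge0 e_ge0 K1_eps K2_eps bT1 T1K bT2 T2K ball1 ball2 tail1 tail2.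
apply: norm_pr_subr_le => //.
  exact: le_trans (sqmod_op_proj_out_tail_le K1_ge0 T1K bT2 ball2 tail2) K1_eps.
exact: le_trans (sqmod_op_proj_out_tail_le K2_ge0 T2K bT1 ball1 tail1) K2_eps.
Qed.

Lemma trace_commutator_pr_cvg0 (d : I -> I -> R) (In : nat -> {fset I}) (T1 T2 : op) :
  uniform_metric_index_set d In -> bounded_op T1 -> bounded_op T2 ->
  row_nonexpansive d T1 -> row_nonexpansive d T2 ->
  (fun n => (pr (Defs.bseq In (T1 \o T2) n) - pr (Defs.bseq In (T2 \o T1) n)) / cardI In n)
    @ \oo --> 0.
Proof.
move=> [_ [_ _ d_sym _] _ boundary_cvg] bT1 bT2 rT1 rT2.
have [K1 K1_ge0 T1K] := bounded_opP bT1; have [K2 K2_ge0 T2K] := bounded_opP bT2.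
apply: cvg0_ratio_of_approx => [n|dl dl_gt0]; first by rewrite /cardI ler0n.
pose eps := (dl / 2) ^+ 2 / (K1 + K2 + 1).
have KK_gt0 : 0 < K1 + K2 + 1 by rewrite ltr_wpDl // addr_ge0.
have eps_gt0 : 0 < eps by rewrite divr_gt0 // exprn_gt0 // divr_gt0.
have K_eps K : 0 <= K -> K <= K1 + K2 -> K * eps <= (dl / 2) ^+ 2.
  by move=> K_ge0 K_le; rewrite /eps mulrA ler_pdivrMr //; have := sqr_ge0 (dl / 2); nra.
have [N1 tail1] := rT1 eps eps_gt0; have [N2 tail2] := rT2 eps eps_gt0.
pose r := Num.max 1 (Num.max N1 N2).
have r_gt0 : 0 < r by rewrite lt_max ltr01.
exists (fun n => (#|` boundary_idx d In r n|)%:R), ((1 + K1 * K2) + (1 + K1 * K2)).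
split=> [|n]; first exact: boundary_cvg.
rewrite -raddfB /Defs.bseq trace_commutator // raddf_sum.
apply: (@norm_sum_fset_split _ _ _ (fun i => `[< exists j, j \notin In n /\ d i j <= r >])).
- exact: ltW.
- by move=> i; exact: norm_pr_defect_le K1_ge0 K2_ge0 bT1 T1K bT2 T2K.
move=> i /asboolPn interior.
have ball_in N : N <= r -> forall j, d j i <= N -> j \in In n.
  move=> Nr j dji; apply/negPn/negP => jn; apply: interior; exists j; split=> //.
  by rewrite d_sym; exact: le_trans Nr.
have N1r : N1 <= r by rewrite !le_max lexx orbT.
have N2r : N2 <= r by rewrite !le_max lexx !orbT.
rewrite (splitr dl); apply: (norm_pr_defect_tail_le K1_ge0 K2_ge0 _ _ _ bT1 T1K bT2 T2K
  (ball_in N1 N1r) (ball_in N2 N2r) (tail1 i) (tail2 i)).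
- by rewrite divr_ge0 // ltW.
- by rewrite K_eps // lerDl.
- by rewrite K_eps // lerDr.
Qed.

Lemma seq_measure_pr_bseq_comm (W : topologicalType) (m : (nat -> R) -> W -> R)
    (d : I -> I -> R) (In : nat -> {fset I}) (T1 T2 : op) :
  uniform_metric_index_set d In -> seq_measure_fun In m ->
  bounded_op T1 -> bounded_op T2 -> row_nonexpansive d T1 -> row_nonexpansive d T2 ->
  m (fun n => pr (Defs.bseq In (T1 \o T2) n)) = m (fun n => pr (Defs.bseq In (T2 \o T1) n)).
Proof.
move=> umis [_ _ m_eq _ _] bT1 bT2 rT1 rT2; have [[In_sub _] _ _ _] := umis.
have XR_comp (T T' : op) : bounded_op T -> bounded_op T' ->
    XR In (fun n => pr (Defs.bseq In (T \o T') n)).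
  move=> bT bT'; have [K K_ge0 TK] := bounded_opP bT; have [K' K'_ge0 T'K] := bounded_opP bT'.
  apply: (XR_pr_bseq In_sub (mulr_ge0 K_ge0 K'_ge0)) => i.
  exact: sqmod_op_comp_le K_ge0 TK bT' T'K.
apply/(m_eq _ _ (XR_comp _ _ bT1 bT2) (XR_comp _ _ bT2 bT1)).
exact: (trace_commutator_pr_cvg0 umis bT1 bT2 rT1 rT2).
Qed.

End CommutatorTrace.

Theorem lemma7p13 (R : realType) (I : countType) (d : I -> I -> R)
  (In : nat -> {fset I}) (W : topologicalType) (m : (nat -> R) -> W -> R) :
  uniform_metric_index_set d In ->
  compact [set: W] -> hausdorff_space W ->
  seq_measure_fun In m ->
  forall T1 T2 : (I -> R[i]) -> I -> R[i],
    bounded_op T1 -> bounded_op T2 ->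
    nonexpansive d T1 -> nonexpansive d T2 ->
    op_measure In m (T1 \o T2) = op_measure In m (T2 \o T1).
Proof.
move=> umis _ _ m_meas T1 T2 bT1 bT2 [rT1 _] [rT2 _].
have comm_Re := seq_measure_pr_bseq_comm sqr_Re_le_sqmod umis m_meas bT1 bT2 rT1 rT2.
have comm_Im := seq_measure_pr_bseq_comm sqr_Im_le_sqmod umis m_meas bT1 bT2 rT1 rT2.
by apply: funext => w; rewrite /op_measure comm_Re comm_Im.
Qed.
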